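(* If the action of $H$ on $X$ is weakly admissible (with respect to $\lambda$), then there exists a Borel function $\varphi:X\to[0,\infty)$ with $\varphi\in L^1(X,\lambda)$ and $0<\int_H\varphi(\xi.h)\,dh\le 1$ for $\lambda$-almost every $\xi\in X$.
   Context: $X$ is a standard Borel space; $H$ is a second countable locally compact group with left Haar measure $dh$, acting on $X$ from the right, $(\xi,h)\mapsto\xi.h$, jointly measurably. $\lambda$ is a $\sigma$-finite Borel measure on $X$ which is quasi-invariant, i.e. for each $h\in H$ the measure $B\mapsto\lambda(B.h)$ is equivalent to $\lambda$. The action is called weakly admissible if there exists a Borel function $\varphi:X\to[0,\infty)$ with $0<\int_H\varphi(\xi.h)\,dh<\infty$ for $\lambda$-almost every $\xi\in X$. *)

From HB Require Import structures.
From mathcomp Require Import all_boot all_order all_algebra.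
From mathcomp Require Import all_classical all_reals all_analysis.
Set Implicit Arguments. Unset Strict Implicit. Unset Printing Implicit Defensive.
Import Order.TTheory GRing.Theory Num.Theory.
Local Open Scope classical_set_scope.
Local Open Scope ring_scope.

Definition is_metric (R : realType) (X : Type) (dist : X -> X -> R) :=
  [/\ forall x y, dist x y = 0 <-> x = y,
      forall x y, dist x y = dist y x &
      forall x y z, dist x z <= dist x y + dist y z].

Definition metric_open (R : realType) (X : Type) (dist : X -> X -> R) (U : set X) :=
  forall x, U x -> exists2 e : R, 0 < e & [set y | dist x y < e] `<=` U.

Definition metric_complete (R : realType) (X : Type) (dist : X -> X -> R) :=
  forall u : nat -> X,
    (forall e : R, 0 < e -> exists N, forall m n, (N <= m)%N -> (N <= n)%N ->
        dist (u m) (u n) < e) ->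
    exists x, forall e : R, 0 < e -> exists N, forall n, (N <= n)%N -> dist (u n) x < e.

Definition metric_separable (R : realType) (X : Type) (dist : X -> X -> R) :=
  exists2 D : set X, countable D &
    forall x (e : R), 0 < e -> exists2 y, D y & dist x y < e.

Definition standard_borel (R : realType) d (X : measurableType d) :=
  exists dist : X -> X -> R,
    [/\ is_metric dist, metric_complete dist, metric_separable dist &
        (@measurable _ X) = <<s metric_open dist >>].

Definition group_laws (H : Type) (mul : H -> H -> H) (inv : H -> H) (one : H) :=
  [/\ forall x y z, mul x (mul y z) = mul (mul x y) z,
      forall x, mul one x = x,
      forall x, mul x one = x,
      forall x, mul (inv x) x = one &
      forall x, mul x (inv x) = one].

Definition sc_lc_group (H : topologicalType) (mul : H -> H -> H) (inv : H -> H) (one : H) :=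
  [/\ group_laws mul inv one,
      continuous (fun p : H * H => mul p.1 p.2),
      continuous inv &
      [/\ hausdorff_space H, locally_compact [set: H] & @second_countable H]].

Definition borelType (H : ptopologicalType) := g_sigma_algebraType (@open H).

Definition left_haar (R : realType) (H : ptopologicalType) (mul : H -> H -> H)
    (mu : {measure set (borelType H) -> \bar R}) :=
  [/\ forall K : set H, compact K -> (mu K < +oo)%E,
      forall A : set (borelType H), measurable A ->
        mu A = ereal_inf [set mu U | U in [set U : set H | open U /\ A `<=` U]],
      forall U : set H, open U ->
        mu U = ereal_sup [set mu K | K in [set K : set H | compact K /\ K `<=` U]],
      mu setT != 0%E &
      forall (g : H) (A : set (borelType H)), measurable A -> mu (mul g @` A) = mu A].

Definition measurable_right_action d (X : measurableType d) (H : ptopologicalType)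
    (mul : H -> H -> H) (one : H) (act : X -> H -> X) :=
  [/\ forall xi, act xi one = xi,
      forall xi g h, act (act xi g) h = act xi (mul g h) &
      measurable_fun setT (fun p : X * borelType H => act p.1 p.2)].

Definition quasi_invariant (R : realType) d (X : measurableType d) (H : Type)
    (act : X -> H -> X) (lambda : {measure set X -> \bar R}) :=
  forall (h : H) (B : set X), measurable B ->
    (lambda ((fun xi => act xi h) @` B) = 0)%E <-> (lambda B = 0)%E.

Definition weakly_admissible (R : realType) d (X : measurableType d)
    (H : ptopologicalType) (act : X -> H -> X)
    (mu : {measure set (borelType H) -> \bar R}) (lambda : {measure set X -> \bar R}) :=
  exists phi : X -> R,
    [/\ measurable_fun setT phi, (forall xi, 0 <= phi xi) &
        {ae lambda, forall xi,
          (0 < \int[mu]_(h in [set: borelType H]) (phi (act xi h))%:E < +oo)%E}].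

(* If [Phi xi = \int phi (xi.h) dh] lies in (0, +oo) almost everywhere, then
   [psi := phi * expR (- phi) * expR (- Phi) * rho] works, where [rho] is a measurable
   function with values in (0, 1] that is integrable for the sigma-finite [lambda].
   By left invariance of Haar measure [Phi] is constant on orbits, so
   [\int psi (xi.h) dh <= Phi xi * expR (- Phi xi) <= 1]; it is positive because [psi] and
   [phi] have the same support; and [psi <= rho] gives integrability. The function [rho] is
   a weighted series of indicators of a finite-measure cover. *)

From HB Require Import structures.
From mathcomp Require Import all_boot all_order all_algebra.
From mathcomp Require Import all_classical all_reals all_analysis.
From mathcomp Require Import measurable_realfun.
Import Order.TTheory GRing.Theory Num.Theory.
Local Open Scope classical_set_scope.
Local Open Scope ring_scope.

Lemma mulr_expRN_le1 (R : realType) (x : R) : 0 <= x -> x * expR (- x) <= 1.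
Proof.
move=> x0; rewrite expRN ler_pdivrMr ?expR_gt0 // mul1r.
by apply: le_trans (expR_ge1Dx x); rewrite lerDr.
Qed.

Section nonnegative_integrals.
Context d (T : measurableType d) (R : realType) (m : {measure set T -> \bar R}).
Local Open Scope ereal_scope.

Lemma ge0_integral_gt0_supp (f g : T -> \bar R) :
  measurable_fun setT f -> measurable_fun setT g ->
  (forall x, 0 <= f x) -> (forall x, 0 <= g x) ->
  (forall x, 0 < f x -> 0 < g x) ->
  0 < \int[m]_x f x -> 0 < \int[m]_x g x.
Proof.
move=> mf mg f0 g0 fg; rewrite !lt0e !integral_ge0 // !andbT.
apply: contraNN => /eqP intg0; apply/eqP.
have : \int[m]_x `|g x| = 0.
  by rewrite -intg0; apply: eq_integral => x _; rewrite gee0_abs.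
move/(ae_eq_integral_abs m measurableT mg) => [N [mN N0 gN]].
rewrite (ge0_negligible_integral mN measurableT mf) // -[RHS](integral0 m (setT `\` N)).
apply: eq_integral => x; rewrite inE => -[_ Nx]; apply/eqP.
have gx0 : g x = 0 by apply: contrapT => gx; apply/Nx/gN => /(_ I).
by have := f0 x; rewrite le_eqVlt => /orP[/eqP <- // | /fg]; rewrite gx0 ltxx.
Qed.

Lemma integral_normalized_bounds (f g : T -> R) :
  measurable_fun setT f -> measurable_fun setT g ->
  (forall x, (0 <= f x)%R) -> (forall x, (0 < f x)%R -> (0 < g x)%R) ->
  (forall x, (0 <= g x <= f x * expR (- fine (\int[m]_y (f y)%:E)))%R) ->
  0 < \int[m]_x (f x)%:E < +oo ->
  0 < \int[m]_x (g x)%:E <= 1.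
Proof.
move=> mf mg f0 fg gf /andP[If0 Ifoo].
set I := \int[m]_x (f x)%:E in gf If0 Ifoo *.
have Ir : I = (fine I)%:E by rewrite fineK // ge0_fin_numE // ltW.
apply/andP; split.
  apply: (@ge0_integral_gt0_supp (fun x => (f x)%:E)) => //.
  - exact/measurable_EFinP.
  - exact/measurable_EFinP.
  - by move=> x; rewrite lee_fin; case/andP: (gf x).
apply: (@le_trans _ _ (\int[m]_x ((f x)%:E * (expR (- fine I))%:E))).
  apply: ge0_le_integral => //.
  - by move=> x _; rewrite lee_fin; case/andP: (gf x).
  - exact/measurable_EFinP.
  - by apply/measurable_EFinP; apply: measurable_funM.
  - by move=> x _; rewrite -EFinM lee_fin; case/andP: (gf x).
rewrite ge0_integralZr //; last 2 first.
- exact/measurable_EFinP.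
- by move=> x _; rewrite lee_fin.
by rewrite -/I Ir -EFinM lee_fin mulr_expRN_le1 // fine_ge0 // ltW.
Qed.

End nonnegative_integrals.

Section sigma_finite_density.
Context {d} {T : measurableType d} {R : realType} (m : {measure set T -> \bar R}).
Local Open Scope ereal_scope.

Definition indic_series (F : (set T)^nat) (w : R^nat) (x : T) : \bar R :=
  \sum_(n <oo) (w n * \1_(F n) x)%:E.

Variables (F : (set T)^nat) (w : R^nat).
Hypotheses (mF : forall n, measurable (F n)) (w_gt0 : forall n, (0 < w n)%R)
  (w_le : forall n, (w n <= (2 ^ n.+1)%:R^-1)%R)
  (wF_le : forall n, (w n)%:E * m (F n) <= ((2 ^ n.+1)%:R^-1)%:E).

Let term_ge0 n x : 0 <= (w n * \1_(F n) x)%:E.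
Proof. by rewrite lee_fin mulr_ge0 // ltW. Qed.

Lemma indic_series_le1 x : indic_series F w x <= 1.
Proof.
apply: le_trans (epsilon_trick0 xpredT ler01); apply: lee_nneseries => // n _.
by rewrite lee_fin indicE div1r; case: (x \in F n); rewrite ?mulr1 ?mulr0.
Qed.

Lemma indic_series_gt0 x : (exists n, F n x) -> 0 < indic_series F w x.
Proof.
move=> [n Fnx]; apply: lt_le_trans (nneseries_lim_ge n.+1 (fun k _ _ => term_ge0 k x)).
rewrite big_nat_recr //= (@lt_le_trans _ _ (w n * \1_(F n) x)%:E) //.
  by rewrite indicE mem_set // mulr1 lte_fin.
by rewrite leeDr // sume_ge0.
Qed.

Lemma measurable_indic_series : measurable_fun setT (indic_series F w).
Proof.
apply: ge0_emeasurable_sum => // n _; apply/measurable_EFinP.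
exact/measurable_funM/measurable_indic.
Qed.

Lemma integral_indic_series_le1 : \int[m]_x indic_series F w x <= 1.
Proof.
have mterm n : measurable_fun setT (fun x => (w n * \1_(F n) x)%:E).
  exact/measurable_EFinP/measurable_funM/measurable_indic.
rewrite integral_nneseries //.
apply: le_trans (epsilon_trick0 xpredT ler01); apply: lee_nneseries => [n _ _|n _].
  by apply: integral_ge0 => x _; exact: term_ge0.
under eq_integral do rewrite EFinM.
rewrite ge0_integralZl_EFin ?integral_indic ?setIT ?div1r //; last exact: ltW.
exact/measurable_EFinP/measurable_indic.
Qed.

End sigma_finite_density.

Lemma sigma_finite_integrable_density {d} {T : measurableType d} {R : realType}
    {m : {measure set T -> \bar R}} :
  sigma_finite setT m ->
  exists rho : T -> R, [/\ measurable_fun setT rho, (forall x, 0 < rho x <= 1) &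
    m.-integrable setT (fun x => (rho x)%:E)].
Proof.
move=> [F FT mF].
pose w n : R := (2 ^ n.+1)%:R^-1 * expR (- fine (m (F n))).
have w_gt0 n : 0 < w n by rewrite mulr_gt0 ?expR_gt0 // invr_gt0 ltr0n expn_gt0.
have w_le n : w n <= (2 ^ n.+1)%:R^-1.
  by rewrite ler_piMr ?invr_ge0 // expR_le1 oppr_le0 fine_ge0.
have wF_le n : ((w n)%:E * m (F n) <= ((2 ^ n.+1)%:R^-1)%:E)%E.
  have mFn_fin : m (F n) \is a fin_num by rewrite ge0_fin_numE ?(mF n).2.
  rewrite -(fineK mFn_fin) -EFinM lee_fin /w -mulrA ler_piMr ?invr_ge0 //.
  by rewrite mulrC mulr_expRN_le1 // fine_ge0.
have mFn n : measurable (F n) := (mF n).1.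
have S01 x : (0 < indic_series F w x <= 1)%E.
  rewrite indic_series_le1 // andbT indic_series_gt0 //.
  by have : setT x by []; rewrite FT => -[n _ Fnx]; exists n.
have S_fin x : indic_series F w x \is a fin_num.
  by case/andP: (S01 x) => S0 S1; rewrite ge0_fin_numE ?(le_lt_trans S1) ?ltry ?ltW.
exists (fun x => fine (indic_series F w x)); split.
- exact/measurableT_comp/measurable_indic_series.
- by move=> x; rewrite -lte_fin -lee_fin fineK.
apply/integrableP; split; first exact/measurable_EFinP/measurableT_comp/measurable_indic_series.
have -> : (\int[m]_x `|(fine (indic_series F w x))%:E| = \int[m]_x indic_series F w x)%E.
  by apply: eq_integral => x _; rewrite fineK // gee0_abs //; case/andP: (S01 x) => /ltW.
exact: le_lt_trans (integral_indic_series_le1 _ _ _ mFn w_gt0 wF_le) (ltry 1).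
Qed.

Section borel_measure.
Context {R : realType} {H : ptopologicalType}.

Lemma compact_borel_measurable (K : set H) :
  hausdorff_space H -> compact K -> measurable (K : set (borelType H)).
Proof.
move=> hH cK; rewrite -[K]setCK; apply: measurableC; apply: sub_sigma_algebra.
by rewrite /= openC; exact: compact_closed.
Qed.

(* The basic open sets with compact closure cover [H] and have finite measure. *)
Lemma finite_on_compact_sigma_finite {mu : {measure set (borelType H) -> \bar R}} :
  hausdorff_space H -> locally_compact [set: H] -> @second_countable H ->
  (forall K : set H, compact K -> (mu K < +oo)%E) -> sigma_finite setT mu.
Proof.
move=> hH lcH [B cB [Bo Bb]] Kfin.
have /pcard_surjP [b bsurj] := cB.
pose rel_compact (U : set H) := B U /\ exists2 K : set H, compact K & U `<=` K.
exists (fun n => if `[< rel_compact (b n) >] then b n : set (borelType H) else set0).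
  apply/seteqP; split => // x _.
  have [K xK [cK _]] := lcH x I; rewrite withinET in xK.
  have [U [BU Ux] UK] := Bb x K xK.
  have [n _ bnU] := bsurj U BU.
  exists n => //; case: asboolP => [_|]; first by rewrite /= bnU.
  by case; rewrite bnU; split => //; exists K.
move=> n; case: asboolP => [[Bbn [K cK bnK]]|_] /=; last by rewrite measure0.
have mbn : measurable (b n : set (borelType H)) by apply: sub_sigma_algebra; exact: Bo.
split => //; apply: le_lt_trans (Kfin K cK); apply: le_measure => //; rewrite inE //.
exact: compact_borel_measurable.
Qed.

End borel_measure.

Section left_invariant_integral.
Context {R : realType} {H : ptopologicalType} {mul : H -> H -> H} {inv : H -> H} {one : H}
  {mu : {measure set (borelType H) -> \bar R}}.
Hypotheses (hgroup : group_laws mul inv one)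
  (mul_cont : continuous (fun p : H * H => mul p.1 p.2))
  (mu_mulI : forall g (A : set (borelType H)), measurable A -> mu (mul g @` A) = mu A).

Lemma measurable_mull (g : H) : measurable_fun setT (mul g : borelType H -> borelType H).
Proof.
have mulg_cont : continuous (mul g).
  by move=> h; apply: continuous2_cvg (mul_cont (g, h)) (cvg_cst g) cvg_id.
apply: (@measurability _ _ (borelType H) (borelType H) setT (mul g) open erefl) => _ [U oU <-].
by apply: sub_sigma_algebra; rewrite setTI; move/continuousP : mulg_cont; apply.
Qed.

Lemma mull_preimage (g : H) (A : set H) : mul g @^-1` A = mul (inv g) @` A.
Proof.
have [mulA mul1 _ mulV1 mul1V] := hgroup.
apply/seteqP; split => [h /= Agh|_ [a Aa <-]].
  by exists (mul g h) => //; rewrite mulA mulV1 mul1.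
by rewrite /= mulA mul1V mul1.
Qed.

Lemma ge0_integral_mull (g : H) (f : borelType H -> \bar R) :
  measurable_fun setT f -> (forall h, 0 <= f h)%E ->
  (\int[mu]_h f (mul g h) = \int[mu]_h f h)%E.
Proof.
move=> mf f0.
have := ge0_integral_pushforward (measurable_mull g) mu measurableT mf (fun h _ => f0 h).
rewrite preimage_setT => <-.
apply: eq_measure_integral => [|? A mA _]; first exact: measurable_mull.
by change (mu (mul g @^-1` A) = mu A); rewrite mull_preimage mu_mulI.
Qed.

End left_invariant_integral.

Section partial_integral.
Context {R : realType} {d1 d2} {X : measurableType d1} {Y : measurableType d2}
  (mu : {measure set Y -> \bar R}) (mu_sfin : sigma_finite setT mu).

(* An alias of [mu] to carry the sigma-finiteness instance that Fubini-Tonelli expects. *)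
Let smu : set Y -> \bar R := mu.
HB.instance Definition _ := Measure.copy smu mu.
HB.instance Definition _ := @Measure_isSigmaFinite.Build _ _ _ smu mu_sfin.

Lemma measurable_fun_partial_integral (f : X * Y -> \bar R) :
  measurable_fun setT f -> (forall p, 0 <= f p)%E ->
  measurable_fun setT (fun x => \int[mu]_y f (x, y))%E.
Proof. exact: (@measurable_fun_fubini_tonelli_F _ _ X Y R smu). Qed.

End partial_integral.

Section orbit_integral.
Context {R : realType} {d} {X : measurableType d} {H : ptopologicalType}
  {mul : H -> H -> H} {inv : H -> H} {one : H}
  {mu : {measure set (borelType H) -> \bar R}} {act : X -> H -> X}.
Hypotheses (hG : sc_lc_group mul inv one) (hmu : left_haar mul mu)
  (hact : measurable_right_action mul one act).

Definition orbit_integral (f : X -> R) (xi : X) : \bar R :=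
  \int[mu]_(h in [set: borelType H]) (f (act xi h))%:E.

Context {f : X -> R}.
Hypotheses (mf : measurable_fun setT f) (f0 : forall xi, 0 <= f xi).

Let mf_act : measurable_fun setT (fun p : X * borelType H => f (act p.1 p.2)).
Proof. by have [_ _ mact] := hact; exact: measurableT_comp mf mact. Qed.

Let mact_orbit (xi : X) : measurable_fun setT (act xi : borelType H -> X).
Proof.
have [_ _ mact] := hact.
exact: (measurable_fun_pair2 (f := fun p : X * borelType H => act p.1 p.2)).
Qed.

Let mf_orbit (xi : X) : measurable_fun setT (fun h : borelType H => f (act xi h)).
Proof. exact: measurableT_comp mf (mact_orbit xi). Qed.

Lemma measurable_orbit_integral : measurable_fun setT (orbit_integral f).
Proof.
have [[_ _ _ [hH lcH scH]] [Kfin _ _ _ _]] := (hG, hmu).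
apply: (measurable_fun_partial_integral _ (finite_on_compact_sigma_finite hH lcH scH Kfin)
  (fun p => (f (act p.1 p.2))%:E)).
- exact/measurable_EFinP.
- by move=> p; rewrite lee_fin.
Qed.

Lemma orbit_integral_act (xi : X) (g : H) :
  orbit_integral f (act xi g) = orbit_integral f xi.
Proof.
have [[hgroup mul_cont _ _] [_ _ _ _ mu_mulI]] := (hG, hmu).
have [_ actM _] := hact.
rewrite /orbit_integral; under eq_integral do rewrite actM.
apply: (ge0_integral_mull hgroup mul_cont mu_mulI g (fun h => (f (act xi h))%:E)).
  by apply/measurable_EFinP; exact: mf_orbit.
by move=> h; rewrite lee_fin.
Qed.

Context {rho : X -> R}.
Hypotheses (mrho : measurable_fun setT rho) (rho01 : forall xi, 0 < rho xi <= 1).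

Definition orbit_normalized (xi : X) : R :=
  f xi * expR (- f xi) * expR (- fine (orbit_integral f xi)) * rho xi.

Lemma measurable_orbit_normalized : measurable_fun setT orbit_normalized.
Proof.
apply: measurable_funM => //; apply: measurable_funM.
  by apply: measurable_funM => //; apply: measurableT_comp => //; exact: measurable_funN.
apply: measurableT_comp => //; apply: measurable_funN.
exact: measurableT_comp measurable_orbit_integral.
Qed.

Lemma orbit_normalized_ge0 (xi : X) : 0 <= orbit_normalized xi.
Proof. by rewrite !mulr_ge0 ?expR_ge0 //; case/andP: (rho01 xi) => /ltW. Qed.

Lemma orbit_normalized_le_rho (xi : X) : orbit_normalized xi <= rho xi.
Proof.
have [rho_gt0 _] := andP (rho01 xi).
rewrite -[leRHS]mul1r ler_wpM2r ?(ltW rho_gt0) // mulr_ile1 ?mulr_ge0 ?expR_ge0 //.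
  exact: mulr_expRN_le1.
by rewrite expR_le1 oppr_le0 fine_ge0 // integral_ge0 // => h _; rewrite lee_fin.
Qed.

Lemma orbit_normalized_gt0 (xi : X) : 0 < f xi -> 0 < orbit_normalized xi.
Proof. by move=> fxi; rewrite !mulr_gt0 ?expR_gt0 //; case/andP: (rho01 xi). Qed.

Lemma orbit_integral_normalized_bounds (xi : X) :
  (0 < orbit_integral f xi < +oo)%E ->
  (0 < orbit_integral orbit_normalized xi <= 1)%E.
Proof.
apply: (@integral_normalized_bounds _ _ _ mu (fun h => f (act xi h))) => [||h|h fh|h].
- exact: mf_orbit.
- exact: measurableT_comp measurable_orbit_normalized (mact_orbit xi).
- exact: f0.
- exact: orbit_normalized_gt0.
rewrite orbit_normalized_ge0 /= -/(orbit_integral f xi) /orbit_normalized orbit_integral_act.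
have /andP[rho_gt0 rho_le1] := rho01 (act xi h).
rewrite -[leLHS]mulrA mulrACA ler_piMr ?mulr_ge0 ?expR_ge0 //.
by rewrite mulr_ile1 ?expR_ge0 ?(ltW rho_gt0) // expR_le1 oppr_le0.
Qed.

End orbit_integral.
Arguments orbit_integral {R d X H} mu act f xi.
Arguments orbit_normalized {R d X H} mu act f rho xi.

Theorem mainTheorem4 (R : realType) (d : measure_display) (X : measurableType d)
    (H : ptopologicalType) (mul : H -> H -> H) (inv : H -> H) (one : H)
    (mu : {measure set (borelType H) -> \bar R})
    (act : X -> H -> X) (lambda : {measure set X -> \bar R}) :
  standard_borel R X ->
  sc_lc_group mul inv one ->
  left_haar mul mu ->
  measurable_right_action mul one act ->
  sigma_finite setT lambda ->
  quasi_invariant act lambda ->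
  weakly_admissible act mu lambda ->
  exists phi : X -> R,
    [/\ measurable_fun setT phi, (forall xi, 0 <= phi xi),
        lambda.-integrable setT (fun xi => (phi xi)%:E) &
        {ae lambda, forall xi,
          (0 < \int[mu]_(h in [set: borelType H]) (phi (act xi h))%:E <= 1)%E}].
Proof.
move=> _ hG hmu hact lambda_sfin _ [phi [mphi phi0 phi_ae]].
have [rho [mrho rho01 rho_int]] := sigma_finite_integrable_density lambda_sfin.
have mpsi := measurable_orbit_normalized hG hmu hact mphi phi0 mrho.
exists (orbit_normalized mu act phi rho); split => //.
- exact: orbit_normalized_ge0.
- apply: le_integrable rho_int => //; first exact/measurable_EFinP.
  move=> xi _; rewrite !gee0_abs ?lee_fin ?orbit_normalized_ge0 //.
    exact: orbit_normalized_le_rho.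
  by case/andP: (rho01 xi) => /ltW.
- apply: filterS phi_ae => xi.
  exact: (orbit_integral_normalized_bounds hG hmu hact mphi phi0 mrho rho01 xi).
Qed.
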